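(* Let $(\mathbf A,\tau)$ be a state-morphism algebra. If $x,y\in\tau(A)$, then $\Theta(x,y)=\Theta_\tau(x,y)$. Consequently, $\Theta(\phi)=\Theta_\tau(\phi)$ whenever $\phi\subseteq\tau(A)^2$.
   Context: Let $F$ be an arbitrary algebraic type. A state-morphism on an algebra $\mathbf A$ of type $F$ is an endomorphism $\tau:\mathbf A\to\mathbf A$ with $\tau\circ\tau=\tau$; $(\mathbf A,\tau)$, viewed as an algebra of type $F$ extended by the unary operation $\tau$, is a state-morphism algebra. $\tau(A)=\{\tau(x):x\in A\}$. For $\phi\subseteq A^2$, $\Theta(\phi)$ is the congruence of $\mathbf A$ generated by $\phi$ and $\Theta_\tau(\phi)$ the congruence of $(\mathbf A,\tau)$ generated by $\phi$; $\Theta(x,y)=\Theta(\{(x,y)\})$, similarly $\Theta_\tau(x,y)$. *)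

From mathcomp Require Import all_boot.
Set Implicit Arguments. Unset Strict Implicit. Unset Printing Implicit Defensive.

Record signature := Signature { sym : Type; arity : sym -> nat }.

Record algebra (F : signature) := Algebra {
  carrier :> Type;
  op : forall f : sym F, ('I_(arity f) -> carrier) -> carrier }.
Arguments op {F} a f _ : rename.


Definition endomorphism (F : signature) (A : algebra F) (t : A -> A) : Prop :=
  forall (f : sym F) (args : 'I_(arity f) -> A),
    t (op A f args) = op A f (fun i => t (args i)).

Definition state_morphism (F : signature) (A : algebra F) (t : A -> A) : Prop :=
  endomorphism t /\ (forall x, t (t x) = t x).

Definition equivalence {T : Type} (R : T -> T -> Prop) : Prop :=
  (forall x, R x x) /\ (forall x y, R x y -> R y x) /\
  (forall x y z, R x y -> R y z -> R x z).

Definition congruence (F : signature) (A : algebra F) (R : A -> A -> Prop) : Prop :=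
  equivalence R /\
  (forall (f : sym F) (a b : 'I_(arity f) -> A),
     (forall i, R (a i) (b i)) -> R (op A f a) (op A f b)).

Definition congruence_t (F : signature) (A : algebra F) (t : A -> A)
    (R : A -> A -> Prop) : Prop :=
  congruence R /\ (forall x y, R x y -> R (t x) (t y)).

Definition Theta (F : signature) (A : algebra F) (phi : A -> A -> Prop) : A -> A -> Prop :=
  fun x y => forall R, congruence R -> (forall a b, phi a b -> R a b) -> R x y.

Definition Theta_t (F : signature) (A : algebra F) (t : A -> A)
    (phi : A -> A -> Prop) : A -> A -> Prop :=
  fun x y => forall R, congruence_t t R -> (forall a b, phi a b -> R a b) -> R x y.

Definition pair_rel {T : Type} (x y : T) : T -> T -> Prop :=
  fun a b => a = x /\ b = y.

Definition in_image {T : Type} (t : T -> T) (x : T) : Prop := exists z, x = t z.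

(* Every congruence of (A, tau) is one of A, so Theta phi <= Theta_tau phi always.
   Conversely, the preimage of a congruence under an endomorphism is again a
   congruence; when tau fixes both sides of every pair of phi (as it does on
   tau(A), tau being idempotent) the preimage of Theta phi under tau contains
   phi, hence contains Theta phi.  So Theta phi is compatible with tau, i.e. a
   congruence of (A, tau) containing phi, and Theta_tau phi <= Theta phi. *)

From mathcomp Require Import all_boot.

Section GeneratedCongruences.

Variables (F : signature) (A : algebra F).
Implicit Types (t : A -> A) (phi R : A -> A -> Prop).

Lemma Theta_congruence phi : congruence (Theta phi).
Proof.
split; [split; [|split]|].
- by move=> x R [[Rr _] _] _.
- by move=> x y Hxy R HR Hphi; case: (HR) => [[_ [Rs _]] _]; apply: Rs; apply: Hxy.
- move=> x y z Hxy Hyz R HR Hphi; case: (HR) => [[_ [_ Rt]] _].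
  by apply: (Rt _ y); [apply: Hxy | apply: Hyz].
- by move=> f a b Hab R HR Hphi; case: (HR) => [_ Rop]; apply: Rop => i; apply: Hab.
Qed.

Lemma Theta_least phi R :
  congruence R -> (forall a b, phi a b -> R a b) ->
  forall x y, Theta phi x y -> R x y.
Proof. by move=> HR Hphi x y; apply. Qed.

Lemma Theta_t_least t phi R :
  congruence_t t R -> (forall a b, phi a b -> R a b) ->
  forall x y, Theta_t t phi x y -> R x y.
Proof. by move=> HR Hphi x y; apply. Qed.

Lemma Theta_sub_Theta_t t phi x y : Theta phi x y -> Theta_t t phi x y.
Proof. by move=> Hxy R [HR _] Hphi; apply: Hxy. Qed.

Lemma congruence_preimage t R :
  endomorphism t -> congruence R -> congruence (fun x y => R (t x) (t y)).
Proof.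
move=> Ht [[Rr [Rs Rt]] Rop]; split; [split; [|split]|].
- by move=> x; apply: Rr.
- by move=> x y; apply: Rs.
- by move=> x y z; apply: Rt.
- by move=> f a b Hab; rewrite !Ht; apply: Rop.
Qed.

Lemma Theta_compat_fixed t phi :
  endomorphism t -> (forall a b, phi a b -> t a = a /\ t b = b) ->
  forall x y, Theta phi x y -> Theta phi (t x) (t y).
Proof.
move=> Ht Hfix; apply: Theta_least.
  exact: congruence_preimage (Theta_congruence phi).
move=> a b Hab; have [-> ->] := Hfix a b Hab.
by move=> R _ Hphi; apply: Hphi.
Qed.

Lemma Theta_t_eq_Theta_fixed t phi :
  endomorphism t -> (forall a b, phi a b -> t a = a /\ t b = b) ->
  forall x y, Theta phi x y <-> Theta_t t phi x y.
Proof.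
move=> Ht Hfix x y; split; first exact: Theta_sub_Theta_t.
apply: Theta_t_least; last by move=> a b Hab R _ Hphi; apply: Hphi.
by split; [apply: Theta_congruence | apply: Theta_compat_fixed].
Qed.

Lemma in_image_idem_fixed t x :
  (forall z, t (t z) = t z) -> in_image t x -> t x = x.
Proof. by move=> Hidem [z ->]; apply: Hidem. Qed.

End GeneratedCongruences.

Theorem lemma3p4 (F : signature) (A : algebra F) (tau : A -> A) :
  state_morphism tau ->
  (forall x y : A, in_image tau x -> in_image tau y ->
     forall a b : A, Theta (pair_rel x y) a b <-> Theta_t tau (pair_rel x y) a b) /\
  (forall phi : A -> A -> Prop,
     (forall a b, phi a b -> in_image tau a /\ in_image tau b) ->
     forall a b : A, Theta phi a b <-> Theta_t tau phi a b).
Proof.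
move=> [Hend Hidem].
have Hgen phi : (forall a b, phi a b -> in_image tau a /\ in_image tau b) ->
    forall a b, Theta phi a b <-> Theta_t tau phi a b.
  move=> Himg; apply: Theta_t_eq_Theta_fixed => // a b Hab.
  by have [Ha Hb] := Himg a b Hab; split; apply: in_image_idem_fixed.
split; last exact: Hgen.
by move=> x y Hx Hy; apply: Hgen => _ _ [-> ->].
Qed.
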